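(* Every element of $F_\tau$ can be written as a product $$a_{i_1}a_{i_2}\cdots a_{i_n}\,b_{j_m}^{-1}\cdots b_{j_2}^{-1}b_{j_1}^{-1}$$ with $n,m\ge0$, where each $a_{i_k}\in\{x_{i_k},y_{i_k}\}$ and each $b_{j_k}\in\{x_{j_k},y_{j_k}\}$, and $i_1\le i_2\le\dots\le i_n$, $j_1\le j_2\le\dots\le j_m$.
   Context: Let $\tau=(\sqrt5-1)/2$. $F_\tau$ is the group, under composition, of orientation-preserving piecewise linear homeomorphisms of $[0,1]$ with finitely many breakpoints, all in $\mathbb{Z}[\tau]$, and slopes integer powers of $\tau$; $gh$ means first $g$ then $h$. Trees: finite rooted binary trees whose carets are each labelled $x$-type or $y$-type; the root corresponds to $[0,1]$, and at a vertex with interval $[p,p+\tau^k]$ an $x$-type caret gives children $[p,p+\tau^{k+2}]$, $[p+\tau^{k+2},p+\tau^k]$ while a $y$-type caret gives $[p,p+\tau^{k+1}]$, $[p+\tau^{k+1},p+\tau^k]$ (left, right). Leaves are numbered $0,1,\dots$ from left to right; a pair $(T_1,T_2)$ with equally many leaves represents the element mapping the $i$-th leaf interval of $T_1$ affinely increasingly onto that of $T_2$. A spine is a tree with only $x$-type carets, each non-root caret being the right child of its parent. $x_n$ ($n\ge0$) is represented by $(A,B)$, $B$ the spine with $n+2$ carets, $A$ the spine with $n+1$ carets with an $x$-type caret attached to leaf $n$; $y_n$ likewise with a $y$-type attached caret. *)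

From Stdlib Require Import Reals Lra Lia List Sorted ZArith.
Import ListNotations.
Open Scope R_scope.

Definition tau : R := (sqrt 5 - 1) / 2.

Definition inZtau (x : R) : Prop :=
  exists m n : Z, x = IZR m + IZR n * tau.

(* f (a function R -> R, only its restriction to [0,1] matters) is an element
   of F_tau: there is a subdivision 0 = p_0 < p_1 < ... < p_r = 1 with all
   p_i in Z[tau] such that on each [p_i, p_{i+1}] f is affine with slope
   tau^(k_i), k_i integer, and f 0 = 0, f 1 = 1.  (This makes f an
   orientation-preserving PL homeomorphism of [0,1] with breakpoints among
   the p_i.) *)
Definition in_Ftau (f : R -> R) : Prop :=
  exists (ps : list R) (ks : list Z),
    length ps = S (length ks) /\
    nth 0 ps 0 = 0 /\ nth (length ks) ps 0 = 1 /\
    (forall p, In p ps -> inZtau p) /\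
    (forall i, (i < length ks)%nat ->
       nth i ps 0 < nth (S i) ps 0 /\
       forall t, nth i ps 0 <= t <= nth (S i) ps 0 ->
         f t = f (nth i ps 0) + powerRZ tau (nth i ks 0%Z) * (t - nth i ps 0)) /\
    f 0 = 0 /\ f 1 = 1.

Inductive tree : Type :=
  | Leaf : tree
  | NodeX : tree -> tree -> tree
  | NodeY : tree -> tree -> tree.

(* leaf intervals (left to right) of a tree rooted at the interval [a,b]
   = [a, a + tau^k]. *)
Fixpoint leaves (T : tree) (a b : R) (k : Z) : list (R * R) :=
  match T with
  | Leaf => [(a, b)]
  | NodeX l r =>
      leaves l a (a + powerRZ tau (k + 2)) (k + 2)
      ++ leaves r (a + powerRZ tau (k + 2)) b (k + 1)
  | NodeY l r =>
      leaves l a (a + powerRZ tau (k + 1)) (k + 1)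
      ++ leaves r (a + powerRZ tau (k + 1)) b (k + 2)
  end.

Fixpoint pl_eval (l : list ((R * R) * (R * R))) (t : R) : R :=
  match l with
  | [] => t
  | ((a, b), (c, d)) :: l' =>
      if Rle_dec a t then
        if Rle_dec t b then c + (t - a) * (d - c) / (b - a) else pl_eval l' t
      else pl_eval l' t
  end.

Definition pair_fun (T1 T2 : tree) (t : R) : R :=
  pl_eval (combine (leaves T1 0 1 0) (leaves T2 0 1 0)) t.

Fixpoint spine_att (c : tree) (m : nat) : tree :=
  match m with
  | O => c
  | S m' => NodeX Leaf (spine_att c m')
  end.

Definition spine (m : nat) : tree := spine_att Leaf m.

(* A-tree: spine with n+1 carets with a caret c attached at leaf n
   (leaf n is the left leaf of the (n+1)-st spine caret) *)
Definition gen_A (c : tree) (n : nat) : tree := spine_att (NodeX c Leaf) n.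

(* generator letters: (true, n) = x_n, (false, n) = y_n *)
Definition letter : Type := (bool * nat)%type.

Definition caret_of (b : bool) : tree :=
  if b then NodeX Leaf Leaf else NodeY Leaf Leaf.

Definition gen_fun (g : letter) : R -> R :=
  pair_fun (gen_A (caret_of (fst g)) (snd g)) (spine (snd g + 2)).

Definition gen_inv_fun (g : letter) : R -> R :=
  pair_fun (spine (snd g + 2)) (gen_A (caret_of (fst g)) (snd g)).

(* gh means first g then h: apply the letters of the word in list order *)
Fixpoint apply_word (w : list letter) (t : R) : R :=
  match w with
  | [] => t
  | g :: w' => apply_word w' (gen_fun g t)
  end.

Fixpoint apply_inv_word (w : list letter) (t : R) : R :=
  match w with
  | [] => t
  | g :: w' => apply_inv_word w' (gen_inv_fun g t)
  end.

(* An element f of F_tau maps a subdivision of [0, 1] into pieces of lengths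
   tau^e affinely onto another such subdivision, because every positive element
   of Z[tau] is a sum of powers of tau.  As tau^k = tau^(k+2) + tau^(k+1), a list
   of exponents whose powers sum to tau^k can be refined to the leaf list of a
   tree: refine every piece down to two adjacent levels N, N + 1; since 1 and
   tau are independent over Z the numbers of pieces of each level are forced,
   and two adjacent pieces of levels N, N + 1 are swapped by changing the type
   of the caret above them.  Hence f is given by a tree pair, and after further
   refinement by a pair of combs (a spine of x-carets with trees hanging to the
   left).  On a comb whose first non-trivial tooth sits at position i and has
   root caret of type x (resp. y), x_i (resp. y_i) rotates that caret onto the
   spine; iterating turns each comb into a spine by a positive word with
   nondecreasing indices, and f = (first word) (second word)^-1. *)

From Stdlib Require Import Reals Lra Lia List Sorted ZArith Permutation.
Import ListNotations.
Open Scope R_scope.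

(** * Arithmetic of tau and of Z[tau] *)

Lemma sqrt5_bounds : 2 < sqrt 5 < 3.
Proof.
  assert (H5 : sqrt 5 * sqrt 5 = 5) by (apply sqrt_sqrt; lra).
  pose proof (sqrt_pos 5). split; nra.
Qed.

Lemma tau_pos : 0 < tau.
Proof. unfold tau. pose proof sqrt5_bounds. lra. Qed.

Lemma tau_lt_1 : tau < 1.
Proof. unfold tau. pose proof sqrt5_bounds. lra. Qed.

Lemma tau_sqr_add : tau * tau + tau = 1.
Proof.
  unfold tau. assert (H5 : sqrt 5 * sqrt 5 = 5) by (apply sqrt_sqrt; lra). nra.
Qed.

Definition tpow (k : Z) : R := powerRZ tau k.

Lemma tpow_add (j k : Z) : tpow (j + k) = tpow j * tpow k.
Proof. apply powerRZ_add. pose proof tau_pos. lra. Qed.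

Lemma tpow_pos (k : Z) : 0 < tpow k.
Proof. apply powerRZ_lt, tau_pos. Qed.

Lemma tpow_0 : tpow 0 = 1.
Proof. reflexivity. Qed.

Lemma tpow_1 : tpow 1 = tau.
Proof. unfold tpow. simpl. ring. Qed.

Lemma tpow_split (k : Z) : tpow (k + 2) + tpow (k + 1) = tpow k.
Proof.
  rewrite !tpow_add, tpow_1. replace (tpow 2) with (tau * tau) by (unfold tpow; simpl; ring).
  rewrite <- Rmult_plus_distr_l, tau_sqr_add. ring.
Qed.

Lemma tpow_sub_mul (g e : Z) : tpow (g - e) * tpow e = tpow g.
Proof. rewrite <- tpow_add. f_equal. lia. Qed.

(* tau is a root of x^2 + x - 1, so p + q tau = 0 forces p^2 - p q - q^2 = 0,
   which has no nonzero integer solution by descent modulo 2. *)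
Lemma golden_form_odd (p q : Z) :
  Z.odd p = true \/ Z.odd q = true -> Z.odd (p * p - p * q - q * q) = true.
Proof.
  rewrite !Z.odd_sub, !Z.odd_mul.
  destruct (Z.odd p), (Z.odd q); simpl; intuition congruence.
Qed.

Lemma golden_form_eq0 (p q : Z) : (p * p - p * q - q * q = 0)%Z -> p = 0%Z /\ q = 0%Z.
Proof.
  remember (Z.to_nat (Z.abs p + Z.abs q)) as n eqn:Hn.
  assert (Hbound : (Z.abs p + Z.abs q <= Z.of_nat n)%Z) by lia. clear Hn.
  revert p q Hbound. induction n as [|n IH]; intros p q Hbound Hform; [lia|].
  assert (Hodd := f_equal Z.odd Hform).
  destruct (Z.odd p) eqn:Hp; [|destruct (Z.odd q) eqn:Hq].
  - rewrite golden_form_odd in Hodd by auto. discriminate.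
  - rewrite golden_form_odd in Hodd by auto. discriminate.
  - rewrite <- Z.negb_even in Hp, Hq. apply Bool.negb_false_iff, Z.even_spec in Hp, Hq.
    destruct Hp as [p' ->], Hq as [q' ->].
    destruct (Z.eq_dec p' 0), (Z.eq_dec q' 0); try lia.
    destruct (IH p' q'); lia.
Qed.

Lemma ztau_indep (p q : Z) : IZR p + IZR q * tau = 0 -> p = 0%Z /\ q = 0%Z.
Proof.
  intros H. apply golden_form_eq0, eq_IZR.
  rewrite !minus_IZR, !mult_IZR.
  replace (IZR p) with (- (IZR q * tau)) by lra.
  pose proof tau_sqr_add. simpl. nra.
Qed.

Fixpoint sum_tpow (l : list Z) : R :=
  match l with [] => 0 | e :: l' => tpow e + sum_tpow l' end.

Lemma sum_tpow_app (l1 l2 : list Z) : sum_tpow (l1 ++ l2) = sum_tpow l1 + sum_tpow l2.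
Proof. induction l1 as [|e l1 IH]; simpl; [ring | rewrite IH; ring]. Qed.

Lemma sum_tpow_nonneg (l : list Z) : 0 <= sum_tpow l.
Proof. induction l as [|e l IH]; simpl; [lra|]. pose proof (tpow_pos e). lra. Qed.

Lemma sum_tpow_repeat (e : Z) (n : nat) : sum_tpow (repeat e n) = INR n * tpow e.
Proof. induction n as [|n IH]; [simpl; ring|]. rewrite S_INR. simpl. rewrite IH. ring. Qed.

Lemma sum_tpow_shift (k : Z) (l : list Z) : sum_tpow (map (Z.add k) l) = tpow k * sum_tpow l.
Proof. induction l as [|e l IH]; simpl; [ring|]. rewrite IH, tpow_add. ring. Qed.

Lemma tpow_fib_shift (a b j : Z) :
  IZR a * tpow j + IZR b * tpow (j + 1)
  = IZR (a + b) * tpow (j + 1) + IZR a * tpow (j + 1 + 1).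
Proof.
  rewrite plus_IZR, <- (tpow_split j). replace (j + 1 + 1)%Z with (j + 2)%Z by lia. ring.
Qed.

(* Decreases along the shift [(a, b) at j  ~>  (a + b, a) at j + 1] while a
   coefficient is negative. *)
Definition neg_weight (a b : Z) : nat :=
  if (a <? 0)%Z then Z.to_nat (2 * - a + 1)
  else if (b <? 0)%Z then Z.to_nat (2 * - b) else 0.

Lemma ztau_pair_nonneg (n : nat) (a b j : Z) :
  (neg_weight a b <= n)%nat -> 0 < IZR a * tpow j + IZR b * tpow (j + 1) ->
  exists j' a' b', (0 <= a')%Z /\ (0 <= b')%Z /\
    IZR a * tpow j + IZR b * tpow (j + 1) = IZR a' * tpow j' + IZR b' * tpow (j' + 1).
Proof.
  revert a b j. induction n as [|n IH]; intros a b j Hw Hpos.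
  - assert (Hab : (0 <= a)%Z /\ (0 <= b)%Z).
    { unfold neg_weight in Hw. destruct (Z.ltb_spec a 0), (Z.ltb_spec b 0); lia. }
    exists j, a, b. tauto.
  - assert (Hv : 0 < IZR a + IZR b * tau).
    { rewrite tpow_add, tpow_1 in Hpos. pose proof (tpow_pos j).
      apply (Rmult_lt_reg_l (tpow j)); nra. }
    pose proof tau_pos. pose proof tau_lt_1.
    destruct (Z_lt_le_dec a 0) as [Ha|Ha]; [|destruct (Z_lt_le_dec b 0) as [Hb|Hb]].
    + apply IZR_lt in Ha as Ha'.
      assert (Hb : (0 < b)%Z) by (apply lt_IZR; nra). apply IZR_lt in Hb as Hb'.
      assert (Hab : (0 < a + b)%Z) by (apply lt_IZR; rewrite plus_IZR; nra).
      rewrite tpow_fib_shift in *. apply IH; auto.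
      unfold neg_weight in *.
      destruct (Z.ltb_spec a 0), (Z.ltb_spec b 0), (Z.ltb_spec (a + b) 0); lia.
    + apply IZR_lt in Hb as Hb'.
      assert (Ha' : (0 < a)%Z) by (apply lt_IZR; nra).
      rewrite tpow_fib_shift in *. apply IH; auto.
      unfold neg_weight in *.
      destruct (Z.ltb_spec a 0), (Z.ltb_spec b 0), (Z.ltb_spec (a + b) 0); lia.
    + exists j, a, b. auto.
Qed.

Lemma ztau_pos_sum_tpow (x : R) : inZtau x -> 0 < x -> exists l, sum_tpow l = x.
Proof.
  intros [m [n ->]] Hpos.
  assert (Hx : IZR m + IZR n * tau = IZR m * tpow 0 + IZR n * tpow (0 + 1))
    by (unfold tpow; simpl; ring).
  rewrite Hx in *.
  destruct (ztau_pair_nonneg _ m n 0 (le_n _) Hpos) as (j & a & b & Ha & Hb & ->).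
  exists (repeat j (Z.to_nat a) ++ repeat (j + 1)%Z (Z.to_nat b)).
  rewrite sum_tpow_app, !sum_tpow_repeat, !INR_IZR_INZ, !Z2Nat.id by auto. reflexivity.
Qed.

(** * Trees and refinements of exponent lists *)

(* The leaf intervals of [T], rooted at an interval of length [tau^k], have
   lengths [tau^j] for [j] running through [leaf_exps T k]. *)
Fixpoint leaf_exps (T : tree) (k : Z) : list Z :=
  match T with
  | Leaf => [k]
  | NodeX l r => leaf_exps l (k + 2) ++ leaf_exps r (k + 1)
  | NodeY l r => leaf_exps l (k + 1) ++ leaf_exps r (k + 2)
  end.

Fixpoint nleaves (T : tree) : nat :=
  match T with
  | Leaf => 1
  | NodeX l r | NodeY l r => nleaves l + nleaves r
  end.

Fixpoint ncarets (T : tree) : nat :=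
  match T with
  | Leaf => 0
  | NodeX l r | NodeY l r => S (ncarets l + ncarets r)
  end.

Lemma length_leaf_exps (T : tree) (k : Z) : length (leaf_exps T k) = nleaves T.
Proof.
  revert k; induction T; intros k; simpl; rewrite ?length_app, ?IHT1, ?IHT2; reflexivity.
Qed.

Lemma nleaves_ncarets (T : tree) : nleaves T = S (ncarets T).
Proof. induction T; simpl; lia. Qed.

Lemma leaf_exps_neq_nil (T : tree) (k : Z) : leaf_exps T k <> [].
Proof.
  intros E. pose proof (length_leaf_exps T k) as HL.
  rewrite E, nleaves_ncarets in HL. discriminate.
Qed.

Lemma sum_tpow_leaf_exps (T : tree) (k : Z) : sum_tpow (leaf_exps T k) = tpow k.
Proof.
  revert k; induction T; intros k; simpl.
  - ring.
  - rewrite sum_tpow_app, IHT1, IHT2. apply tpow_split.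
  - rewrite sum_tpow_app, IHT1, IHT2, Rplus_comm. apply tpow_split.
Qed.

Fixpoint refine (D : list Z) (Ss : list tree) : list Z :=
  match D, Ss with
  | d :: D', U :: Ss' => leaf_exps U d ++ refine D' Ss'
  | _, _ => []
  end.

Lemma refine_app_split (D1 D2 : list Z) (Ss : list tree) :
  refine (D1 ++ D2) Ss
  = refine D1 (firstn (length D1) Ss) ++ refine D2 (skipn (length D1) Ss).
Proof.
  revert Ss; induction D1 as [|d D1 IH]; intros [|U Ss]; simpl; auto.
  - destruct D2; reflexivity.
  - rewrite IH, app_assoc. reflexivity.
Qed.

Lemma refine_app (D1 D2 : list Z) (Ss1 Ss2 : list tree) :
  length Ss1 = length D1 ->
  refine (D1 ++ D2) (Ss1 ++ Ss2) = refine D1 Ss1 ++ refine D2 Ss2.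
Proof.
  revert Ss1; induction D1 as [|d D1 IH]; intros [|U Ss1] HL; simpl in *; try lia; auto.
  rewrite IH by lia. apply app_assoc.
Qed.

Lemma refine_Leaves (D : list Z) (n : nat) : length D = n -> refine D (repeat Leaf n) = D.
Proof.
  intros <-. induction D as [|d D IH]; simpl; auto. rewrite IH. reflexivity.
Qed.

Lemma sum_tpow_refine (D : list Z) (Ss : list tree) :
  length Ss = length D -> sum_tpow (refine D Ss) = sum_tpow D.
Proof.
  revert Ss; induction D as [|d D IH]; intros [|U Ss] HL; simpl in *; try lia; auto.
  rewrite sum_tpow_app, sum_tpow_leaf_exps, IH by lia. reflexivity.
Qed.

Lemma leaf_exps_refine (T : tree) (k : Z) (Rs : list tree) :
  length Rs = nleaves T -> exists T', leaf_exps T' k = refine (leaf_exps T k) Rs.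
Proof.
  revert k Rs; induction T as [|l IHl r IHr|l IHl r IHr]; intros k Rs HL; simpl in *.
  - destruct Rs as [|U [|]]; simpl in HL; try lia. exists U. symmetry. apply app_nil_r.
  - rewrite refine_app_split, length_leaf_exps.
    destruct (IHl (k + 2)%Z (firstn (nleaves l) Rs)) as [L HLe]; [rewrite length_firstn; lia|].
    destruct (IHr (k + 1)%Z (skipn (nleaves l) Rs)) as [R HRe]; [rewrite length_skipn; lia|].
    exists (NodeX L R). simpl. rewrite HLe, HRe. reflexivity.
  - rewrite refine_app_split, length_leaf_exps.
    destruct (IHl (k + 1)%Z (firstn (nleaves l) Rs)) as [L HLe]; [rewrite length_firstn; lia|].
    destruct (IHr (k + 2)%Z (skipn (nleaves l) Rs)) as [R HRe]; [rewrite length_skipn; lia|].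
    exists (NodeY L R). simpl. rewrite HLe, HRe. reflexivity.
Qed.

Lemma refine_trans (D : list Z) (Ss Rs : list tree) :
  length Ss = length D -> length Rs = length (refine D Ss) ->
  exists Ss', length Ss' = length D /\ refine D Ss' = refine (refine D Ss) Rs.
Proof.
  revert Ss Rs; induction D as [|d D IH]; intros [|U Ss] Rs HS HR; simpl in *; try lia.
  - exists []. auto.
  - rewrite length_app, length_leaf_exps in HR.
    rewrite refine_app_split, length_leaf_exps.
    destruct (leaf_exps_refine U d (firstn (nleaves U) Rs)) as [U' HU];
      [rewrite length_firstn; lia|].
    destruct (IH Ss (skipn (nleaves U) Rs)) as [Ss' [HL HE]]; [lia | rewrite length_skipn; lia|].
    exists (U' :: Ss'). simpl. rewrite HU, HE. split; auto.
Qed.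

Definition Node (b : bool) : tree -> tree -> tree := if b then NodeX else NodeY.

Lemma tree_Node_ind (P : tree -> Prop) :
  P Leaf -> (forall b l r, P l -> P r -> P (Node b l r)) -> forall T, P T.
Proof.
  intros HLeaf HNode. induction T as [|l IHl r IHr|l IHl r IHr].
  - exact HLeaf.
  - exact (HNode true l r IHl IHr).
  - exact (HNode false l r IHl IHr).
Qed.

Lemma leaf_exps_Node (b : bool) (l r : tree) (k : Z) :
  leaf_exps (Node b l r) k
  = leaf_exps l (k + if b then 2 else 1) ++ leaf_exps r (k + if b then 1 else 2).
Proof. destruct b; reflexivity. Qed.

Lemma nleaves_Node (b : bool) (l r : tree) : nleaves (Node b l r) = (nleaves l + nleaves r)%nat.
Proof. destruct b; reflexivity. Qed.

Lemma refine_middle (A B C : list Z) (Rs : list tree) :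
  length Rs = length B ->
  refine (A ++ B ++ C) (repeat Leaf (length A) ++ Rs ++ repeat Leaf (length C))
  = A ++ refine B Rs ++ C.
Proof.
  intros HL. rewrite !refine_app by (rewrite ?repeat_length; auto).
  rewrite !refine_Leaves; reflexivity.
Qed.

(* Every tree can be refined so that its root caret has a prescribed type:
   [X(U1, X(L, R)) = Y(Y(U1, L), R)] and [Y(Y(L, R), U2) = X(L, X(R, U2))]. *)
Lemma split_caret (U : tree) (e : Z) (b : bool) :
  exists Rs L R, length Rs = nleaves U /\
    refine (leaf_exps U e) Rs = leaf_exps (Node b L R) e.
Proof.
  revert e b; induction U as [|U1 IH1 U2 IH2|U1 IH1 U2 IH2]; intros e b.
  { exists [Node b Leaf Leaf], Leaf, Leaf. split; [reflexivity | apply app_nil_r]. }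
  all: destruct b.
  1, 4: exists (repeat Leaf (nleaves U1 + nleaves U2)), U1, U2;
        split; [apply repeat_length | apply refine_Leaves, length_leaf_exps].
  - destruct (IH2 (e + 1)%Z true) as (Rs2 & L2 & R2 & HL & HE).
    exists (repeat Leaf (nleaves U1) ++ Rs2), (NodeY U1 L2), R2. split.
    + rewrite length_app, repeat_length. simpl. lia.
    + simpl. rewrite refine_app, refine_Leaves, HE
        by (rewrite ?repeat_length, ?length_leaf_exps; reflexivity).
      simpl. rewrite <- !Z.add_assoc, <- app_assoc. reflexivity.
  - destruct (IH1 (e + 1)%Z false) as (Rs1 & L1 & R1 & HL & HE).
    exists (Rs1 ++ repeat Leaf (nleaves U2)), L1, (NodeX R1 U2). split.
    + rewrite length_app, repeat_length. simpl. lia.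
    + simpl. rewrite refine_app, refine_Leaves, HE
        by (rewrite ?HL, ?repeat_length, ?length_leaf_exps; reflexivity).
      simpl. rewrite <- !Z.add_assoc, <- app_assoc. reflexivity.
Qed.

Lemma common_refinement (S U : tree) (e : Z) :
  exists Rs Ss, length Rs = nleaves U /\ length Ss = nleaves S /\
    refine (leaf_exps U e) Rs = refine (leaf_exps S e) Ss.
Proof.
  revert U e; induction S as [|b S1 S2 IH1 IH2] using tree_Node_ind; intros U e.
  - exists (repeat Leaf (nleaves U)), [U]. split; [apply repeat_length | split; auto].
    simpl. rewrite app_nil_r. apply refine_Leaves, length_leaf_exps.
  - destruct (split_caret U e b) as (Rs0 & L & R & HL0 & HE0).
    rewrite leaf_exps_Node in HE0 |- *.
    destruct (IH1 L (e + if b then 2 else 1)%Z) as (Rs1 & Ss1 & HR1 & HS1 & HE1).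
    destruct (IH2 R (e + if b then 1 else 2)%Z) as (Rs2 & Ss2 & HR2 & HS2 & HE2).
    destruct (refine_trans (leaf_exps U e) Rs0 (Rs1 ++ Rs2)) as (Rs & HR & HE).
    + rewrite length_leaf_exps. auto.
    + rewrite HE0, !length_app, !length_leaf_exps. lia.
    + exists Rs, (Ss1 ++ Ss2). split; [rewrite HR; apply length_leaf_exps|split].
      * rewrite length_app, nleaves_Node. lia.
      * rewrite HE, HE0, !refine_app, HE1, HE2 by (rewrite ?length_leaf_exps; lia).
        reflexivity.
Qed.

(** * Exponent lists refinable to the leaves of a tree *)

Definition tree_refinable (k : Z) (D : list Z) : Prop :=
  exists T Ss, length Ss = length D /\ leaf_exps T k = refine D Ss.

Lemma tree_refinable_of_refine (k : Z) (D : list Z) (Ss : list tree) :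
  length Ss = length D -> tree_refinable k (refine D Ss) -> tree_refinable k D.
Proof.
  intros HS (T & Rs & HR & HE).
  destruct (refine_trans D Ss Rs HS HR) as (Ss' & HL & HE').
  exists T, Ss'. rewrite HE, HE'. auto.
Qed.

(* Two adjacent pieces of exponents [N] and [N + 1] sit under a caret at level
   [N - 1]; re-splitting it by the caret of the other type swaps them. *)
Lemma tree_refinable_swap (k x y : Z) (pre post : list Z) :
  (x = y + 1 \/ y = x + 1)%Z ->
  tree_refinable k (pre ++ x :: y :: post) -> tree_refinable k (pre ++ y :: x :: post).
Proof.
  intros Hxy (T & Ss & HL & HE).
  rewrite length_app in HL. simpl in HL.
  rewrite <- (firstn_skipn (length pre) Ss) in HE.
  destruct (skipn (length pre) Ss) as [|Ux [|Uy Ss3]] eqn:Hskip;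
    pose proof (f_equal (@length tree) Hskip) as Hlen; rewrite length_skipn in Hlen;
    simpl in Hlen; try lia.
  set (Ss1 := firstn (length pre) Ss) in HE.
  assert (HL1 : length Ss1 = length pre) by (unfold Ss1; rewrite length_firstn; lia).
  rewrite refine_app in HE by auto. simpl in HE.
  assert (Hbe : exists (b : bool) (e : Z),
             x = (e + if b then 2 else 1)%Z /\ y = (e + if b then 1 else 2)%Z).
  { destruct Hxy; [exists true, (y - 1)%Z | exists false, (x - 1)%Z]; split; lia. }
  destruct Hbe as (b & e & -> & ->).
  destruct (split_caret (Node b Ux Uy) e (negb b)) as (Rs & L & R & HRs & HLR).
  rewrite !leaf_exps_Node in HLR. rewrite Bool.if_negb, Bool.if_negb in HLR.
  destruct (leaf_exps_refine T k (repeat Leaf (length (refine pre Ss1)) ++ Rs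
                                  ++ repeat Leaf (length (refine post Ss3)))) as [T' HT'].
  { rewrite <- (length_leaf_exps T k), HE, !length_app, !repeat_length, HRs, nleaves_Node,
      !length_leaf_exps. lia. }
  exists T', (Ss1 ++ L :: R :: Ss3). split.
  - rewrite !length_app. simpl. lia.
  - rewrite HT', HE, (app_assoc (leaf_exps Ux _)), refine_middle
      by (rewrite HRs, length_app, !length_leaf_exps, nleaves_Node; reflexivity).
    rewrite HLR, refine_app by auto. simpl. rewrite <- !app_assoc. reflexivity.
Qed.

Lemma tree_refinable_perm (k N : Z) (l l' : list Z) :
  Permutation l l' -> (forall z, In z l -> z = N \/ z = (N + 1)%Z) ->
  forall pre, tree_refinable k (pre ++ l') -> tree_refinable k (pre ++ l).
Proof.
  induction 1 as [|x l l' _ IH|x y l|l l' l'' Hll' IH1 _ IH2]; intros Hl pre HR; auto.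
  - replace (pre ++ x :: l) with ((pre ++ [x]) ++ l) by (rewrite <- app_assoc; reflexivity).
    apply IH; [intros z Hz; apply Hl; right; auto | rewrite <- app_assoc; auto].
  - destruct (Z.eq_dec x y) as [<-|Hne]; auto.
    apply tree_refinable_swap; auto.
    destruct (Hl x), (Hl y); simpl; auto; lia.
  - apply IH1, IH2; auto.
    intros z Hz. apply Hl, (Permutation_in z (Permutation_sym Hll')), Hz.
Qed.

Fixpoint level_tree (n : nat) : tree :=
  match n with
  | O => Leaf
  | S m => NodeX (match m with O => Leaf | S p => level_tree p end) (level_tree m)
  end.

Lemma level_tree_exps (n : nat) (e z : Z) :
  In z (leaf_exps (level_tree n) e) -> z = (e + Z.of_nat n)%Z \/ z = (e + Z.of_nat n + 1)%Z.
Proof.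
  revert e. induction n as [n IH] using lt_wf_ind. intros e Hz.
  destruct n as [|[|p]].
  - destruct Hz as [<-|[]]. lia.
  - destruct Hz as [<-|[<-|[]]]; lia.
  - change (In z (leaf_exps (level_tree p) (e + 2) ++ leaf_exps (level_tree (S p)) (e + 1)))
      in Hz.
    apply in_app_or in Hz. destruct Hz as [Hz|Hz]; apply IH in Hz; lia.
Qed.

Lemma sum_tpow_two_letters (N : Z) (w : list Z) :
  (forall z, In z w -> z = N \/ z = (N + 1)%Z) ->
  sum_tpow w = INR (count_occ Z.eq_dec w N) * tpow N
               + INR (count_occ Z.eq_dec w (N + 1)%Z) * tpow (N + 1).
Proof.
  induction w as [|z w IH]; intros Hw; simpl; [ring|].
  rewrite IH by (intros; apply Hw; right; auto).
  destruct (Hw z (or_introl eq_refl)) as [->| ->];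
    [destruct (Z.eq_dec N N), (Z.eq_dec N (N + 1))
    |destruct (Z.eq_dec (N + 1) N), (Z.eq_dec (N + 1) (N + 1))];
    try lia; rewrite S_INR; ring.
Qed.

(* Powers of tau at two consecutive levels are linearly independent over Z. *)
Lemma two_letter_perm (N : Z) (w w' : list Z) :
  (forall z, In z w -> z = N \/ z = (N + 1)%Z) ->
  (forall z, In z w' -> z = N \/ z = (N + 1)%Z) ->
  sum_tpow w = sum_tpow w' -> Permutation w w'.
Proof.
  intros Hw Hw' Hsum.
  rewrite (sum_tpow_two_letters N w Hw), (sum_tpow_two_letters N w' Hw'), tpow_add, tpow_1
    in Hsum.
  set (a := count_occ Z.eq_dec w N) in Hsum.
  set (b := count_occ Z.eq_dec w (N + 1)%Z) in Hsum.
  set (a' := count_occ Z.eq_dec w' N) in Hsum.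
  set (b' := count_occ Z.eq_dec w' (N + 1)%Z) in Hsum.
  assert (Hab : a = a' /\ b = b').
  { assert (H0 : IZR (Z.of_nat a - Z.of_nat a') + IZR (Z.of_nat b - Z.of_nat b') * tau = 0).
    { rewrite !minus_IZR, <- !INR_IZR_INZ. pose proof (tpow_pos N).
      apply (Rmult_eq_reg_l (tpow N)); lra. }
    apply ztau_indep in H0. lia. }
  apply (Permutation_count_occ Z.eq_dec). intros x.
  destruct (Z.eq_dec x N) as [->|HN]; [apply Hab|].
  destruct (Z.eq_dec x (N + 1)) as [->|HN1]; [apply Hab|].
  assert (Hx : ~ In x w /\ ~ In x w')
    by (split; intros Hx; [destruct (Hw x Hx) | destruct (Hw' x Hx)]; lia).
  rewrite (proj1 (count_occ_not_In Z.eq_dec w x) (proj1 Hx)),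
    (proj1 (count_occ_not_In Z.eq_dec w' x) (proj2 Hx)).
  reflexivity.
Qed.

Lemma in_refine_map (f : Z -> tree) (D : list Z) (z : Z) :
  In z (refine D (map f D)) -> exists d, In d D /\ In z (leaf_exps (f d) d).
Proof.
  induction D as [|d D IH]; simpl; [tauto|]. intros Hz.
  apply in_app_or in Hz. destruct Hz as [Hz|Hz]; [eauto|].
  destruct (IH Hz) as (d' & Hd' & Hz'). eauto.
Qed.

(* Refine every piece down to the two deepest levels [N, N + 1]; the result has
   the same letter counts as a level tree, hence is a permutation of it. *)
Theorem tree_refinable_of_sum (k : Z) (D : list Z) : sum_tpow D = tpow k -> tree_refinable k D.
Proof.
  intros HS.
  set (N := fold_right Z.max k D).
  assert (HN : (k <= N)%Z /\ forall d, In d D -> (d <= N)%Z).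
  { unfold N. clear HS. induction D as [|d D [IH1 IH2]]; simpl; [split; [lia | tauto]|].
    split; [lia|]. intros d' [<-|Hd']; [lia|]. specialize (IH2 d' Hd'). lia. }
  set (level := fun d => level_tree (Z.to_nat (N - d))).
  apply (tree_refinable_of_refine k D (map level D)); [apply length_map|].
  set (W := leaf_exps (level k) k).
  assert (HW : forall z, In z W -> z = N \/ z = (N + 1)%Z)
    by (intros z Hz; apply level_tree_exps in Hz; lia).
  assert (HD : forall z, In z (refine D (map level D)) -> z = N \/ z = (N + 1)%Z).
  { intros z Hz. apply in_refine_map in Hz. destruct Hz as (d & Hd & Hz).
    apply level_tree_exps in Hz. specialize (proj2 HN d Hd). lia. }
  assert (Hperm : Permutation (refine D (map level D)) W).
  { apply (two_letter_perm N); auto.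
    unfold W. rewrite sum_tpow_refine, sum_tpow_leaf_exps by apply length_map. exact HS. }
  apply (tree_refinable_perm k N _ _ Hperm HD []).
  exists (level k), (repeat Leaf (length W)). split; [apply repeat_length|].
  symmetry. apply refine_Leaves. reflexivity.
Qed.

(** * Maps sending tau-adic pieces affinely onto tau-adic pieces *)

Definition maps_piece (f : R -> R) (a c : R) (e g : Z) : Prop :=
  forall t, a <= t <= a + tpow e -> f t = c + tpow (g - e) * (t - a).

Fixpoint maps_pieces (f : R -> R) (a c : R) (es gs : list Z) : Prop :=
  match es, gs with
  | [], [] => True
  | e :: es', g :: gs' =>
      maps_piece f a c e g /\ maps_pieces f (a + tpow e) (c + tpow g) es' gs'
  | _, _ => False
  end.

Lemma maps_pieces_length (f : R -> R) (a c : R) (es gs : list Z) :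
  maps_pieces f a c es gs -> length es = length gs.
Proof.
  revert a c gs; induction es as [|e es IH]; intros a c [|g gs]; simpl; try tauto.
  intros [_ H]. f_equal. eauto.
Qed.

Lemma maps_pieces_app (f : R -> R) (a c : R) (es1 gs1 es2 gs2 : list Z) :
  length es1 = length gs1 ->
  maps_pieces f a c (es1 ++ es2) (gs1 ++ gs2) <->
  maps_pieces f a c es1 gs1 /\
  maps_pieces f (a + sum_tpow es1) (c + sum_tpow gs1) es2 gs2.
Proof.
  revert a c gs1; induction es1 as [|e es1 IH]; intros a c [|g gs1] HL; simpl in *; try lia.
  - rewrite !Rplus_0_r. tauto.
  - rewrite IH, !Rplus_assoc by lia. tauto.
Qed.

Lemma maps_piece_sub (f : R -> R) (a c s : R) (e g d : Z) :
  maps_piece f a c e g -> 0 <= s -> s + tpow (e + d) <= tpow e ->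
  maps_piece f (a + s) (c + tpow (g - e) * s) (e + d) (g + d).
Proof.
  intros Hf Hs Hle t Ht. replace (g + d - (e + d))%Z with (g - e)%Z by lia.
  rewrite Hf by lra. ring.
Qed.

Lemma maps_piece_refine (f : R -> R) (U : tree) (a c : R) (e g : Z) :
  maps_piece f a c e g -> maps_pieces f a c (leaf_exps U e) (leaf_exps U g).
Proof.
  revert a c e g; induction U as [|b l r IHl IHr] using tree_Node_ind; intros a c e g Hf.
  { simpl. auto. }
  rewrite !leaf_exps_Node.
  set (d1 := if b then 2%Z else 1%Z). set (d2 := if b then 1%Z else 2%Z).
  assert (Hsplit : tpow (e + d1) + tpow (e + d2) = tpow e).
  { unfold d1, d2. destruct b; [|rewrite Rplus_comm]; apply tpow_split. }
  pose proof (tpow_pos (e + d1)). pose proof (tpow_pos (e + d2)).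
  apply maps_pieces_app; [rewrite !length_leaf_exps; auto|].
  rewrite !sum_tpow_leaf_exps. split.
  - apply IHl. pose proof (maps_piece_sub f a c 0 e g d1 Hf) as H1.
    rewrite Rplus_0_r, Rmult_0_r, Rplus_0_r in H1. apply H1; lra.
  - apply IHr. replace (tpow (g + d1)) with (tpow (g - e) * tpow (e + d1))
      by (rewrite <- tpow_add; f_equal; lia).
    apply maps_piece_sub; auto; lra.
Qed.

Lemma maps_pieces_refine (f : R -> R) (a c : R) (es gs : list Z) (Ss : list tree) :
  maps_pieces f a c es gs -> length Ss = length es ->
  maps_pieces f a c (refine es Ss) (refine gs Ss).
Proof.
  revert a c gs Ss; induction es as [|e es IH]; intros a c [|g gs] [|U Ss]; simpl;
    try tauto; try lia.
  intros [Hf Hrest] HL.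
  apply maps_pieces_app; [rewrite !length_leaf_exps; auto|].
  rewrite !sum_tpow_leaf_exps. split.
  - apply maps_piece_refine, Hf.
  - apply IH; auto.
Qed.

Lemma maps_pieces_comp (f h : R -> R) (a c d : R) (es gs hs : list Z) :
  maps_pieces f a c es gs -> maps_pieces h c d gs hs ->
  maps_pieces (fun t => h (f t)) a d es hs.
Proof.
  revert a c d gs hs; induction es as [|e es IH]; intros a c d [|g gs] [|k hs]; simpl;
    try tauto.
  intros [Hf Hfs] [Hh Hhs]. split; [|eauto].
  intros t Ht. pose proof (tpow_pos (g - e)).
  assert (Hge : tpow (g - e) * tpow e = tpow g) by apply tpow_sub_mul.
  rewrite Hf, Hh by (auto; nra).
  replace (tpow (k - e)) with (tpow (k - g) * tpow (g - e)) by (rewrite <- tpow_add; f_equal; lia).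
  ring.
Qed.

Lemma maps_pieces_start (f : R -> R) (a c : R) (es gs : list Z) :
  maps_pieces f a c es gs -> es <> [] -> f a = c.
Proof.
  destruct es as [|e es], gs as [|g gs]; simpl; try tauto.
  intros [Hf _] _. pose proof (tpow_pos e). rewrite Hf by lra. ring.
Qed.

Lemma maps_pieces_end (f : R -> R) (a c : R) (es gs : list Z) :
  maps_pieces f a c es gs -> es <> [] -> f (a + sum_tpow es) = c + sum_tpow gs.
Proof.
  revert a c gs; induction es as [|e es IH]; intros a c [|g gs]; simpl; try tauto.
  intros [Hf Hfs] _. destruct es as [|e' es].
  - destruct gs; simpl in Hfs; try tauto. pose proof (tpow_pos e).
    rewrite !Rplus_0_r, Hf, <- (tpow_sub_mul g e) by lra. ring.
  - rewrite <- !Rplus_assoc, (IH _ _ _ Hfs) by discriminate. reflexivity.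
Qed.

Lemma maps_pieces_range (f : R -> R) (a c : R) (es gs : list Z) :
  maps_pieces f a c es gs -> es <> [] ->
  forall t, a <= t <= a + sum_tpow es -> c <= f t <= c + sum_tpow gs.
Proof.
  revert a c gs; induction es as [|e es IH]; intros a c [|g gs]; simpl; try tauto.
  intros [Hf Hfs] _ t Ht.
  pose proof (sum_tpow_nonneg es). pose proof (sum_tpow_nonneg gs).
  pose proof (tpow_pos e). pose proof (tpow_pos g).
  destruct (Rle_dec t (a + tpow e)).
  - pose proof (tpow_sub_mul g e). pose proof (tpow_pos (g - e)).
    rewrite Hf by lra. split; nra.
  - destruct es as [|e' es]; [simpl in Ht; lra|].
    assert (c + tpow g <= f t <= c + tpow g + sum_tpow gs)
      by (apply (IH _ _ _ Hfs); [discriminate | lra]).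
    lra.
Qed.

Lemma maps_pieces_unique (f h : R -> R) (a c : R) (es gs : list Z) :
  maps_pieces f a c es gs -> maps_pieces h a c es gs -> es <> [] ->
  forall t, a <= t <= a + sum_tpow es -> f t = h t.
Proof.
  revert a c gs; induction es as [|e es IH]; intros a c [|g gs]; simpl; try tauto.
  intros [Hf Hfs] [Hh Hhs] _ t Ht.
  destruct (Rle_dec t (a + tpow e)).
  - rewrite Hf, Hh by lra. reflexivity.
  - destruct es as [|e' es]; [simpl in Ht; lra|].
    apply (IH _ _ _ Hfs Hhs); [discriminate | lra].
Qed.

Lemma maps_pieces_leaves_range (f : R -> R) (T1 T2 : tree) (t : R) :
  maps_pieces f 0 0 (leaf_exps T1 0) (leaf_exps T2 0) -> 0 <= t <= 1 -> 0 <= f t <= 1.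
Proof.
  intros Hf Ht. pose proof (maps_pieces_range _ _ _ _ _ Hf (leaf_exps_neq_nil _ _) t) as Hr.
  rewrite !sum_tpow_leaf_exps, tpow_0, Rplus_0_l in Hr. auto.
Qed.

Lemma maps_pieces_leaves_unique (f h : R -> R) (T : tree) (gs : list Z) (t : R) :
  maps_pieces f 0 0 (leaf_exps T 0) gs -> maps_pieces h 0 0 (leaf_exps T 0) gs ->
  0 <= t <= 1 -> f t = h t.
Proof.
  intros Hf Hh Ht. apply (maps_pieces_unique _ _ _ _ _ _ Hf Hh (leaf_exps_neq_nil _ _)).
  rewrite sum_tpow_leaf_exps, tpow_0. lra.
Qed.

Lemma maps_pieces_id (a : R) (es : list Z) : maps_pieces (fun t => t) a a es es.
Proof.
  revert a; induction es as [|e es IH]; intros a; simpl; auto.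
  split; auto. intros t _. rewrite Z.sub_diag. unfold tpow. simpl. ring.
Qed.

Lemma maps_pieces_ext (f h : R -> R) (a c : R) (es gs : list Z) :
  maps_pieces f a c es gs -> (forall t, a <= t -> h t = f t) -> maps_pieces h a c es gs.
Proof.
  revert a c gs; induction es as [|e es IH]; intros a c [|g gs]; simpl; try tauto.
  intros [Hf Hfs] Hhf. pose proof (tpow_pos e). split.
  - intros t Ht. rewrite Hhf by lra. auto.
  - apply IH; auto. intros t Ht. apply Hhf. lra.
Qed.

Fixpoint intervals (a : R) (es : list Z) : list (R * R) :=
  match es with
  | [] => []
  | e :: es' => (a, a + tpow e) :: intervals (a + tpow e) es'
  end.

Lemma intervals_app (a : R) (es1 es2 : list Z) :
  intervals a (es1 ++ es2) = intervals a es1 ++ intervals (a + sum_tpow es1) es2.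
Proof.
  revert a; induction es1 as [|e es1 IH]; intros a; simpl.
  - rewrite Rplus_0_r. reflexivity.
  - rewrite IH, Rplus_assoc. reflexivity.
Qed.

Lemma leaves_intervals (T : tree) (a b : R) (k : Z) :
  b = a + tpow k -> leaves T a b k = intervals a (leaf_exps T k).
Proof.
  revert a b k; induction T as [|l IHl r IHr|l IHl r IHr]; intros a b k ->; simpl.
  - reflexivity.
  - rewrite intervals_app, sum_tpow_leaf_exps, (IHl a _ _ eq_refl).
    rewrite (IHr _ _ (k + 1)%Z) by (rewrite <- (tpow_split k); unfold tpow; ring).
    reflexivity.
  - rewrite intervals_app, sum_tpow_leaf_exps, (IHl a _ _ eq_refl).
    rewrite (IHr _ _ (k + 2)%Z) by (rewrite <- (tpow_split k); unfold tpow; ring).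
    reflexivity.
Qed.

Lemma pl_eval_maps_pieces (a c : R) (es gs : list Z) :
  length es = length gs ->
  maps_pieces (pl_eval (combine (intervals a es) (intervals c gs))) a c es gs.
Proof.
  revert a c gs; induction es as [|e es IH]; intros a c [|g gs] HL;
    simpl in HL; try lia; [exact I|].
  cbn [intervals combine maps_pieces].
  pose proof (tpow_pos e). pose proof (tpow_pos g).
  set (rest := combine (intervals (a + tpow e) es) (intervals (c + tpow g) gs)).
  assert (Hhead : maps_piece (pl_eval (((a, a + tpow e), (c, c + tpow g)) :: rest)) a c e g).
  { intros t Ht. simpl.
    destruct (Rle_dec a t); [|lra]. destruct (Rle_dec t (a + tpow e)); [|lra].
    rewrite <- (tpow_sub_mul g e). field. lra. }
  split; [exact Hhead|].
  specialize (IH (a + tpow e) (c + tpow g) gs ltac:(lia)).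
  destruct es as [|e' es]; [destruct gs; simpl in *; auto; lia|].
  apply (maps_pieces_ext _ _ _ _ _ _ IH). intros t Ht.
  (* at the common endpoint [pl_eval] still uses the first interval *)
  destruct (Rle_dec t (a + tpow e)).
  - replace t with (a + tpow e) by lra.
    rewrite Hhead, (maps_pieces_start _ _ _ _ _ IH) by (lra || discriminate).
    rewrite <- (tpow_sub_mul g e). ring.
  - simpl. destruct (Rle_dec a t); [|lra]. destruct (Rle_dec t (a + tpow e)); [lra|].
    reflexivity.
Qed.

Lemma pair_fun_maps_pieces (T1 T2 : tree) :
  nleaves T1 = nleaves T2 -> maps_pieces (pair_fun T1 T2) 0 0 (leaf_exps T1 0) (leaf_exps T2 0).
Proof.
  intros HL. unfold pair_fun.
  rewrite !(leaves_intervals _ 0 1 0) by (unfold tpow; simpl; ring).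
  apply pl_eval_maps_pieces. rewrite !length_leaf_exps. exact HL.
Qed.

(** * Combs and the generators *)

Fixpoint comb (ls : list tree) (c : tree) : tree :=
  match ls with [] => c | l :: ls' => NodeX l (comb ls' c) end.

Lemma comb_app (ls1 ls2 : list tree) (c : tree) : comb (ls1 ++ ls2) c = comb ls1 (comb ls2 c).
Proof. induction ls1 as [|l ls1 IH]; simpl; [|rewrite IH]; reflexivity. Qed.

Lemma spine_att_comb (c : tree) (m : nat) : spine_att c m = comb (repeat Leaf m) c.
Proof. induction m as [|m IH]; simpl; [|rewrite IH]; reflexivity. Qed.

Lemma spine_comb (m : nat) : spine m = comb (repeat Leaf m) Leaf.
Proof. apply spine_att_comb. Qed.

Lemma gen_A_comb (c : tree) (n : nat) : gen_A c n = comb (repeat Leaf n ++ [c]) Leaf.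
Proof. unfold gen_A. rewrite spine_att_comb, comb_app. reflexivity. Qed.

Lemma ncarets_comb_Leaves (m : nat) (c : tree) :
  ncarets (comb (repeat Leaf m) c) = (m + ncarets c)%nat.
Proof. induction m as [|m IH]; simpl; lia. Qed.

Lemma ncarets_spine (m : nat) : ncarets (spine m) = m.
Proof. unfold spine. rewrite spine_att_comb, ncarets_comb_Leaves. simpl. lia. Qed.

Lemma nleaves_gen_A (b : bool) (n : nat) :
  nleaves (gen_A (caret_of b) n) = nleaves (spine (n + 2)).
Proof.
  rewrite !nleaves_ncarets, ncarets_spine. unfold gen_A.
  rewrite spine_att_comb, ncarets_comb_Leaves. destruct b; simpl; lia.
Qed.

Lemma gen_maps_pieces (g : letter) :
  maps_pieces (gen_fun g) 0 0
    (leaf_exps (gen_A (caret_of (fst g)) (snd g)) 0) (leaf_exps (spine (snd g + 2)) 0).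
Proof. apply pair_fun_maps_pieces, nleaves_gen_A. Qed.

Lemma gen_inv_maps_pieces (g : letter) :
  maps_pieces (gen_inv_fun g) 0 0
    (leaf_exps (spine (snd g + 2)) 0) (leaf_exps (gen_A (caret_of (fst g)) (snd g)) 0).
Proof. apply pair_fun_maps_pieces. symmetry. apply nleaves_gen_A. Qed.

Lemma refine_comb_prefix (ls ls' : list tree) (c c' : tree) (Rs : list tree) (i : nat) :
  (forall k, refine (leaf_exps (comb ls c) k) Rs = leaf_exps (comb ls' c') k) ->
  forall k, refine (leaf_exps (comb (repeat Leaf i ++ ls) c) k) (repeat Leaf i ++ Rs)
            = leaf_exps (comb (repeat Leaf i ++ ls') c') k.
Proof.
  intros Hrefine. induction i as [|i IH]; intros k; simpl; auto.
  rewrite IH. reflexivity.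
Qed.

Lemma gen_fun_rotation (b : bool) (i : nat) (a c : tree) (rest : list tree) :
  maps_pieces (gen_fun (b, i)) 0 0
    (leaf_exps (comb (repeat Leaf i ++ Node b a c :: rest) Leaf) 0)
    (leaf_exps (comb (repeat Leaf i ++ a :: c :: rest) Leaf) 0).
Proof.
  set (Rs := repeat Leaf i ++ [a; c; comb rest Leaf]).
  assert (Hdom : refine (leaf_exps (gen_A (caret_of b) i) 0) Rs
                 = leaf_exps (comb (repeat Leaf i ++ Node b a c :: rest) Leaf) 0).
  { rewrite gen_A_comb. apply refine_comb_prefix. intros k.
    destruct b; simpl; rewrite app_nil_r, <- app_assoc; reflexivity. }
  assert (Hcod : refine (leaf_exps (spine (i + 2)) 0) Rs
                 = leaf_exps (comb (repeat Leaf i ++ a :: c :: rest) Leaf) 0).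
  { rewrite spine_comb, repeat_app. apply refine_comb_prefix. intros k.
    simpl. rewrite app_nil_r. reflexivity. }
  rewrite <- Hdom, <- Hcod. apply maps_pieces_refine; [apply (gen_maps_pieces (b, i))|].
  unfold Rs. rewrite length_leaf_exps, nleaves_gen_A, nleaves_ncarets, ncarets_spine,
    length_app, repeat_length. simpl. lia.
Qed.

Fixpoint lead_leaves (ls : list tree) : nat :=
  match ls with Leaf :: ls' => S (lead_leaves ls') | _ => 0 end.

Lemma lead_leaves_app (i : nat) (ls : list tree) :
  lead_leaves (repeat Leaf i ++ ls) = (i + lead_leaves ls)%nat.
Proof. induction i as [|i IH]; simpl; auto. Qed.

Lemma leading_Leaves (ls : list tree) :
  ls = repeat Leaf (length ls) \/
  exists i b a c rest, ls = repeat Leaf i ++ Node b a c :: rest.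
Proof.
  induction ls as [|[|l r|l r] ls IH]; simpl.
  - left. reflexivity.
  - destruct IH as [IH|(i & b & a & c & rest & IH)].
    + left. rewrite <- IH. reflexivity.
    + right. exists (S i), b, a, c, rest. rewrite IH. reflexivity.
  - right. exists 0%nat, true, l, r, ls. reflexivity.
  - right. exists 0%nat, false, l, r, ls. reflexivity.
Qed.

Lemma comb_spine_word_from (n : nat) (ls : list tree) :
  (list_sum (map ncarets ls) <= n)%nat ->
  exists w : list letter,
    Sorted le (map snd w) /\ Forall (fun g => lead_leaves ls <= snd g)%nat w /\
    maps_pieces (apply_word w) 0 0
      (leaf_exps (comb ls Leaf) 0) (leaf_exps (spine (ncarets (comb ls Leaf))) 0).
Proof.
  revert ls; induction n as [|n IH]; intros ls Hn;
    destruct (leading_Leaves ls) as [Hls | (i & b & a & c & rest & ->)].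
  1, 3: exists []; split; [constructor | split; [constructor|]];
        rewrite Hls, <- spine_comb, ncarets_spine; apply maps_pieces_id.
  - rewrite map_app, list_sum_app in Hn. destruct b; simpl in Hn; lia.
  - set (ls' := repeat Leaf i ++ a :: c :: rest).
    destruct (IH ls') as (w & Hsorted & Hlead & Hw).
    { unfold ls'. rewrite map_app, list_sum_app in *. destruct b; simpl in *; lia. }
    unfold ls' in Hlead. rewrite lead_leaves_app in Hlead.
    exists ((b, i) :: w). split; [|split].
    + simpl. constructor; auto. destruct w as [|g w]; constructor.
      inversion Hlead. lia.
    + rewrite lead_leaves_app.
      replace (lead_leaves (Node b a c :: rest)) with 0%nat by (destruct b; reflexivity).
      constructor; [simpl; lia|].
      eapply Forall_impl; [|exact Hlead]. intros g Hg. simpl in Hg. lia.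
    + replace (ncarets (comb (repeat Leaf i ++ Node b a c :: rest) Leaf))
        with (ncarets (comb ls' Leaf))
        by (unfold ls'; rewrite !comb_app, !ncarets_comb_Leaves; destruct b; simpl; lia).
      exact (maps_pieces_comp _ _ _ _ _ _ _ _ (gen_fun_rotation b i a c rest) Hw).
Qed.

Lemma comb_spine_word (ls : list tree) :
  exists w : list letter, Sorted le (map snd w) /\
    maps_pieces (apply_word w) 0 0
      (leaf_exps (comb ls Leaf) 0) (leaf_exps (spine (ncarets (comb ls Leaf))) 0).
Proof.
  destruct (comb_spine_word_from _ ls (le_n _)) as (w & Hsorted & _ & Hw). eauto.
Qed.

Lemma refine_to_comb (T : tree) (k : Z) :
  exists Rs ls, length (Rs ++ [Leaf]) = nleaves T /\
    refine (leaf_exps T k) (Rs ++ [Leaf]) = leaf_exps (comb ls Leaf) k.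
Proof.
  revert k; induction T as [|l _ r IHr|l _ r IHr]; intros k.
  - exists [], []. split; reflexivity.
  - destruct (IHr (k + 1)%Z) as (Rs & ls & HL & HE).
    exists (repeat Leaf (nleaves l) ++ Rs), (l :: ls). split.
    + rewrite <- app_assoc, length_app, repeat_length, HL. reflexivity.
    + simpl. rewrite <- app_assoc, refine_app, refine_Leaves, HE
        by (rewrite ?repeat_length, ?length_leaf_exps; reflexivity).
      reflexivity.
  - (* refine [l] to [X(a, X(Lb, Rb))]; then [Y(X(a, X(Lb, Rb)), r) = X(Y(a, Lb), X(Rb, r))] *)
    destruct (common_refinement (NodeX Leaf (NodeX Leaf Leaf)) l (k + 1)%Z)
      as (Rs1 & [|a [|Lb [|Rb [|]]]] & HR1 & HS & HE1); simpl in HS; try lia.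
    destruct (IHr (k + 2)%Z) as (Rs & ls & HL & HE).
    exists (Rs1 ++ Rs), (NodeY a Lb :: Rb :: ls). split.
    + rewrite <- app_assoc, !length_app, HR1. rewrite length_app in HL. simpl in *. lia.
    + simpl. rewrite <- app_assoc, refine_app, HE1, HE by (rewrite HR1, length_leaf_exps; auto).
      simpl. rewrite <- !Z.add_assoc, <- !app_assoc. reflexivity.
Qed.

Lemma comb_refine (ls : list tree) (k : Z) (Rs : list tree) :
  length (Rs ++ [Leaf]) = nleaves (comb ls Leaf) ->
  exists ls', refine (leaf_exps (comb ls Leaf) k) (Rs ++ [Leaf]) = leaf_exps (comb ls' Leaf) k.
Proof.
  revert k Rs; induction ls as [|l ls IH]; intros k Rs HL.
  - destruct Rs as [|U Rs]; [exists []; reflexivity|].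
    rewrite length_app in HL. simpl in HL. lia.
  - simpl in HL |- *. rewrite length_app, Nat.add_1_r, (nleaves_ncarets (comb _ _)) in HL.
    rewrite refine_app_split, length_leaf_exps, firstn_app, skipn_app.
    replace (nleaves l - length Rs)%nat with 0%nat by lia. simpl. rewrite app_nil_r.
    destruct (leaf_exps_refine l (k + 2)%Z (firstn (nleaves l) Rs)) as [l' Hl'];
      [rewrite length_firstn; lia|].
    destruct (IH (k + 1)%Z (skipn (nleaves l) Rs)) as [ls' Hls'];
      [rewrite length_app, length_skipn, (nleaves_ncarets (comb _ _)); simpl; lia|].
    exists (l' :: ls'). simpl. rewrite Hl', Hls'. reflexivity.
Qed.

(** * Elements of F_tau as tree pairs, and the normal form *)

Lemma maps_pieces_affine (f : R -> R) (a : R) (k : Z) (es : list Z) :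
  (forall t, a <= t <= a + sum_tpow es -> f t = f a + tpow k * (t - a)) ->
  maps_pieces f a (f a) es (map (Z.add k) es).
Proof.
  revert a; induction es as [|e es IH]; intros a Hf; simpl in *; auto.
  pose proof (sum_tpow_nonneg es). pose proof (tpow_pos e). split.
  - intros t Ht. replace (k + e - e)%Z with k by lia. apply Hf. lra.
  - replace (f a + tpow (k + e)) with (f (a + tpow e))
      by (rewrite (Hf (a + tpow e)), tpow_add by lra; ring).
    apply IH. intros t Ht. rewrite (Hf t), (Hf (a + tpow e)) by lra. ring.
Qed.

Lemma maps_pieces_of_subdivision (f : R -> R) (ps : list R) (ks : list Z) :
  length ps = S (length ks) ->
  (forall p, In p ps -> inZtau p) ->
  (forall i, (i < length ks)%nat ->
     nth i ps 0 < nth (S i) ps 0 /\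
     forall t, nth i ps 0 <= t <= nth (S i) ps 0 ->
       f t = f (nth i ps 0) + powerRZ tau (nth i ks 0%Z) * (t - nth i ps 0)) ->
  exists es gs, maps_pieces f (nth 0 ps 0) (f (nth 0 ps 0)) es gs /\
    sum_tpow es = nth (length ks) ps 0 - nth 0 ps 0.
Proof.
  revert ps; induction ks as [|k ks IH]; intros ps Hlen HZ Hpieces.
  { exists [], []. simpl. split; auto. ring. }
  destruct ps as [|p0 [|p1 ps]]; simpl in Hlen; try lia.
  destruct (IH (p1 :: ps)) as (es & gs & Hf & Hsum).
  - simpl. lia.
  - intros p Hp. apply HZ. right. exact Hp.
  - intros i Hi. apply (Hpieces (S i)). simpl. lia.
  - destruct (Hpieces 0%nat) as [Hlt Haff]; [simpl; lia|]. simpl in Hlt, Haff.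
    assert (Hdiff : inZtau (p1 - p0)).
    { destruct (HZ p0) as (m0 & n0 & E0); [left; auto|].
      destruct (HZ p1) as (m1 & n1 & E1); [right; left; auto|].
      exists (m1 - m0)%Z, (n1 - n0)%Z. rewrite E0, E1, !minus_IZR. ring. }
    destruct (ztau_pos_sum_tpow (p1 - p0) Hdiff ltac:(lra)) as [L HL].
    exists (L ++ es), (map (Z.add k) L ++ gs). simpl. split.
    + apply maps_pieces_app; [rewrite length_map; reflexivity|]. split.
      * apply maps_pieces_affine. intros t Ht. apply Haff. lra.
      * rewrite sum_tpow_shift, HL.
        replace (p0 + (p1 - p0)) with p1 by ring.
        replace (f p0 + tpow k * (p1 - p0)) with (f p1) by (rewrite Haff by lra; reflexivity).
        exact Hf.
    + rewrite sum_tpow_app, HL, Hsum. simpl. ring.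
Qed.

Lemma in_Ftau_maps_pieces (f : R -> R) :
  in_Ftau f -> exists es gs, maps_pieces f 0 0 es gs /\ sum_tpow es = 1 /\ sum_tpow gs = 1.
Proof.
  intros (ps & ks & Hlen & H0 & H1 & HZ & Hpieces & Hf0 & Hf1).
  destruct (maps_pieces_of_subdivision f ps ks Hlen HZ Hpieces) as (es & gs & Hf & Hes).
  rewrite H0, H1, Hf0 in *. rewrite Rminus_0_r in Hes.
  assert (Hne : es <> []) by (intros ->; simpl in Hes; lra).
  exists es, gs. split; [exact Hf | split; [exact Hes|]].
  pose proof (maps_pieces_end _ _ _ _ _ Hf Hne) as Hend.
  rewrite Hes, Rplus_0_l, Hf1 in Hend. lra.
Qed.

Lemma maps_pieces_tree_pair (f : R -> R) (a c : R) (k k' : Z) (es gs : list Z) :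
  maps_pieces f a c es gs -> sum_tpow es = tpow k -> sum_tpow gs = tpow k' ->
  exists T1 T2, maps_pieces f a c (leaf_exps T1 k) (leaf_exps T2 k').
Proof.
  intros Hf Hes Hgs.
  destruct (tree_refinable_of_sum k es Hes) as (T1 & Ss & HSs & HT1).
  pose proof (maps_pieces_length _ _ _ _ _ Hf) as Hlen.
  pose proof (maps_pieces_refine _ _ _ _ _ Ss Hf HSs) as Hf1. rewrite <- HT1 in Hf1.
  destruct (tree_refinable_of_sum k' (refine gs Ss)) as (T2 & Rs & HRs & HT2).
  { rewrite sum_tpow_refine by lia. exact Hgs. }
  pose proof (maps_pieces_length _ _ _ _ _ Hf1) as Hlen1.
  pose proof (maps_pieces_refine _ _ _ _ _ Rs Hf1 ltac:(lia)) as Hf2. rewrite <- HT2 in Hf2.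
  destruct (leaf_exps_refine T1 k Rs) as [T1' HT1'];
    [rewrite <- (length_leaf_exps T1 k); lia|].
  exists T1', T2. rewrite HT1'. exact Hf2.
Qed.

Lemma maps_pieces_comb_pair (f : R -> R) (a c : R) (k k' : Z) (T1 T2 : tree) :
  maps_pieces f a c (leaf_exps T1 k) (leaf_exps T2 k') ->
  exists ls1 ls2, maps_pieces f a c (leaf_exps (comb ls1 Leaf) k) (leaf_exps (comb ls2 Leaf) k').
Proof.
  intros Hf. pose proof (maps_pieces_length _ _ _ _ _ Hf) as Hlen.
  rewrite !length_leaf_exps in Hlen.
  destruct (refine_to_comb T1 k) as (Rs1 & ls1 & HL1 & HE1).
  pose proof (maps_pieces_refine _ _ _ _ _ (Rs1 ++ [Leaf]) Hf
                ltac:(rewrite length_leaf_exps; exact HL1)) as Hf1.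
  rewrite HE1 in Hf1.
  destruct (leaf_exps_refine T2 k' (Rs1 ++ [Leaf])) as [T2' HT2']; [lia|].
  rewrite <- HT2' in Hf1.
  pose proof (maps_pieces_length _ _ _ _ _ Hf1) as Hlen1. rewrite !length_leaf_exps in Hlen1.
  destruct (refine_to_comb T2' k') as (Rs2 & ls2 & HL2 & HE2).
  pose proof (maps_pieces_refine _ _ _ _ _ (Rs2 ++ [Leaf]) Hf1
                ltac:(rewrite length_leaf_exps; lia)) as Hf2.
  rewrite HE2 in Hf2.
  destruct (comb_refine ls1 k Rs2) as [ls1' Hls1']; [lia|].
  rewrite Hls1' in Hf2. eauto.
Qed.

Lemma gen_fun_range (g : letter) (t : R) : 0 <= t <= 1 -> 0 <= gen_fun g t <= 1.
Proof. apply maps_pieces_leaves_range with (1 := gen_maps_pieces g). Qed.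

Lemma gen_inv_fun_gen_fun (g : letter) (t : R) : 0 <= t <= 1 -> gen_inv_fun g (gen_fun g t) = t.
Proof.
  apply (maps_pieces_leaves_unique (fun s => gen_inv_fun g (gen_fun g s)) (fun s => s) _ _ t
           (maps_pieces_comp _ _ _ _ _ _ _ _ (gen_maps_pieces g) (gen_inv_maps_pieces g))
           (maps_pieces_id _ _)).
Qed.

Lemma apply_inv_word_snoc (w : list letter) (g : letter) (t : R) :
  apply_inv_word (w ++ [g]) t = gen_inv_fun g (apply_inv_word w t).
Proof. revert t; induction w as [|g' w IH]; intros t; simpl; auto. Qed.

Lemma apply_inv_word_rev (w : list letter) (t : R) :
  0 <= t <= 1 -> apply_inv_word (rev w) (apply_word w t) = t.
Proof.
  revert t; induction w as [|g w IH]; intros t Ht; simpl; auto.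
  rewrite apply_inv_word_snoc, IH by (apply gen_fun_range, Ht).
  apply gen_inv_fun_gen_fun, Ht.
Qed.

Theorem mainTheorem12 :
  forall f : R -> R, in_Ftau f ->
  exists (as_ bs : list letter),
    Sorted le (map snd as_) /\ Sorted le (map snd bs) /\
    forall t, 0 <= t <= 1 ->
      f t = apply_inv_word (rev bs) (apply_word as_ t).
Proof.
  intros f Hf.
  destruct (in_Ftau_maps_pieces f Hf) as (es & gs & Hpieces & Hes & Hgs).
  rewrite <- tpow_0 in Hes, Hgs.
  destruct (maps_pieces_tree_pair _ _ _ _ _ _ _ Hpieces Hes Hgs) as (T1 & T2 & Htrees).
  destruct (maps_pieces_comb_pair _ _ _ _ _ _ _ Htrees) as (ls1 & ls2 & Hcombs).
  destruct (comb_spine_word ls1) as (as_ & Has & Hwa).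
  destruct (comb_spine_word ls2) as (bs & Hbs & Hwb).
  exists as_, bs. split; [exact Has | split; [exact Hbs|]].
  assert (Hcarets : ncarets (comb ls1 Leaf) = ncarets (comb ls2 Leaf)).
  { apply maps_pieces_length in Hcombs.
    rewrite !length_leaf_exps, !nleaves_ncarets in Hcombs. lia. }
  rewrite Hcarets in Hwa.
  intros t Ht.
  rewrite <- (maps_pieces_leaves_unique _ _ _ _ t
                (maps_pieces_comp _ _ _ _ _ _ _ _ Hcombs Hwb) Hwa Ht).
  rewrite apply_inv_word_rev by exact (maps_pieces_leaves_range _ _ _ t Hcombs Ht).
  reflexivity.
Qed.
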